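(* Let $V$ be a finite-dimensional complex vector space and $R(z)\in\mathrm{End}(V\otimes V)$, $z\in\mathbb{C}$, a family of operators satisfying $R(u)_{12}R(u+v)_{23}R(v)_{12}=R(v)_{23}R(u+v)_{12}R(u)_{23}$ on $V^{\otimes3}$ for all $u,v\in\mathbb{C}$. If $R(0)=I\otimes I$, then for each $z\in\mathbb{C}$ there is a scalar $c(z)\in\mathbb{C}$ with $R(z)R(-z)=R(-z)R(z)=c(z)\,I\otimes I$. In particular, if $R(z)$ is not an isomorphism, then $R(z)R(-z)=0=R(-z)R(z)$.
   Context: $I$ denotes the identity on $V$; for $A\in\mathrm{End}(V\otimes V)$, $A_{12}=A\otimes I$ and $A_{23}=I\otimes A$ as operators on $V^{\otimes3}$. *)

From HB Require Import structures.
From mathcomp Require Import all_boot all_order all_algebra.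
From mathcomp Require Import reals.
From mathcomp.real_closed Require Import complex mxtens.
Set Implicit Arguments. Unset Strict Implicit. Unset Printing Implicit Defensive.
Import Order.TTheory GRing.Theory Num.Theory.
Local Open Scope ring_scope.

(* V = K^n with K a field; V (x) V = K^(n*n), V (x) V (x) V = K^(n*n*n),
   with the Kronecker (mxtens) identification of tensor bases. *)

Definition op12 (K : nzRingType) (n : nat) (A : 'M[K]_(n * n)) : 'M[K]_(n * n * n) :=
  A *t (1%:M : 'M[K]_n).

(* A_23 = I (x) A on V^{(x)3}, cast from n*(n*n) to (n*n)*n (same basis order) *)
Definition op23 (K : nzRingType) (n : nat) (A : 'M[K]_(n * n)) : 'M[K]_(n * n * n) :=
  castmx (mulnA n n n, mulnA n n n) ((1%:M : 'M[K]_n) *t A).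

From mathcomp Require Import all_boot all_order all_algebra.
From mathcomp Require Import reals.
From mathcomp.real_closed Require Import complex mxtens.
Set Implicit Arguments.
Unset Strict Implicit.
Unset Printing Implicit Defensive.

Import GRing.Theory.
Local Open Scope ring_scope.
Local Open Scope complex_scope.

(* Yang-Baxter at (z, -z) and at (-z, z), with R(0) = I, gives
   (R(z)R(-z))_12 = (R(-z)R(z))_23 and (R(-z)R(z))_12 = (R(z)R(-z))_23.
   Comparing entries, A (x) I = I (x) B forces A = I (x) F and B = F (x) I;
   the swapped equation gives likewise A = F' (x) I, and I (x) F = F' (x) I
   makes A and B the same scalar c.  If R(z) is singular, then so is c I, hence c = 0. *)

Local Notation idx := mxtens_index.

Lemma scalar_mx_tensE (K : nzRingType) m p (c : K) (a a' : 'I_m) (b b' : 'I_p) :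
  (c%:M : 'M_(m * p)) (idx (a, b)) (idx (a', b')) = c *+ ((a == a') && (b == b')).
Proof. by rewrite mxE (can_eq (@mxtens_indexK _ _)) xpair_eqE. Qed.

Lemma tensmx11 (K : nzRingType) m p :
  (1%:M : 'M[K]_m) *t (1%:M : 'M[K]_p) = 1%:M.
Proof.
apply/matrixP => i j.
case: (mxtens_indexP i) => a b; case: (mxtens_indexP j) => a' b'.
rewrite tensmxE scalar_mx_tensE !mxE.
by case: eqP; case: eqP; rewrite ?mulr0 ?mul0r ?mulr1.
Qed.

Lemma mxtens_indexA m n p (i : 'I_m) (j : 'I_n) (k : 'I_p) :
  cast_ord (esym (mulnA m n p)) (idx (idx (i, j), k)) = idx (i, idx (j, k)).
Proof. by apply: val_inj; rewrite /= mulnDl -mulnA addnA. Qed.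

Section TensorLegs.
Variables (K : nzRingType) (n : nat).
Implicit Types (A B : 'M[K]_(n * n)) (a b c : 'I_n).

Lemma op12E A a b c a' b' c' :
  op12 A (idx (idx (a, b), c)) (idx (idx (a', b'), c'))
  = A (idx (a, b)) (idx (a', b')) * (c == c')%:R.
Proof. by rewrite /op12 tensmxE mxE. Qed.

Lemma op23E B a b c a' b' c' :
  op23 B (idx (idx (a, b), c)) (idx (idx (a', b'), c'))
  = (a == a')%:R * B (idx (b, c)) (idx (b', c')).
Proof. by rewrite /op23 castmxE !mxtens_indexA tensmxE mxE. Qed.

Lemma op12_1 : op12 (1%:M : 'M[K]_(n * n)) = 1%:M.
Proof. exact: tensmx11. Qed.

Lemma op23_1 : op23 (1%:M : 'M[K]_(n * n)) = 1%:M.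
Proof. by rewrite /op23 tensmx11; case: _ / mulnA. Qed.

Lemma op12_eq_op23E A B : op12 A = op23 B ->
  forall a b a' b' c,
  A (idx (a, b)) (idx (a', b')) = (a == a')%:R * B (idx (b, c)) (idx (b', c)).
Proof.
move=> eAB a b a' b' c.
pose entry (M : 'M[K]_(n * n * n)) := M (idx (idx (a, b), c)) (idx (idx (a', b'), c)).
have := congr1 entry eAB.
by rewrite /entry op12E op23E eqxx mulr1.
Qed.

Lemma op12_op23_swap_scalar A B : op12 A = op23 B -> op12 B = op23 A ->
  forall o : 'I_n, A = (A (idx (o, o)) (idx (o, o)))%:M.
Proof.
(* A_(ab,a'b') = [a = a'] B_(bo,b'o) = [a = a'] [b = b'] A_(oo,oo) *)
move=> eAB eBA o; apply/matrixP => i j.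
case: (mxtens_indexP i) => a b; case: (mxtens_indexP j) => a' b'.
rewrite scalar_mx_tensE (op12_eq_op23E eAB _ _ _ _ o) (op12_eq_op23E eBA _ _ _ _ o).
rewrite (op12_eq_op23E eAB _ _ _ _ o) eqxx mul1r.
by case: eqP; case: eqP; rewrite ?mulr0 ?mul0r ?mul1r.
Qed.

End TensorLegs.

Lemma op12_eq_op23_scalar (K : nzRingType) n (A B : 'M[K]_(n * n)) :
  op12 A = op23 B -> op12 B = op23 A -> exists c, A = c%:M /\ B = c%:M.
Proof.
case: n A B => [|m] A B eAB eBA; first by exists 0; split; apply/matrixP => -[].
exists (A (idx (ord0, ord0)) (idx (ord0, ord0))).
split; first exact: op12_op23_swap_scalar eAB eBA ord0.
rewrite (op12_eq_op23E eAB ord0 ord0 ord0 ord0 ord0) eqxx mul1r.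
exact: op12_op23_swap_scalar eBA eAB ord0.
Qed.

Section TensorLegsMul.
Variables (K : comNzRingType) (n : nat).
Implicit Types A B : 'M[K]_(n * n).

Lemma op12M A B : op12 (A *m B) = op12 A *m op12 B.
Proof. by rewrite /op12 tensmx_mul mulmx1. Qed.

Lemma op23M A B : op23 (A *m B) = op23 A *m op23 B.
Proof. by rewrite /op23; case: _ / (mulnA n n n); rewrite tensmx_mul mulmx1. Qed.

End TensorLegsMul.

Section Unitarity.
Variables (K : comNzRingType) (Z : zmodType) (n : nat).
Variable R : Z -> 'M[K]_(n * n).
Hypothesis yang_baxter : forall u v,
  op12 (R u) *m op23 (R (u + v)) *m op12 (R v)
  = op23 (R v) *m op12 (R (u + v)) *m op23 (R u).
Hypothesis R0 : R 0 = 1%:M.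

Lemma yang_baxter_opp z : op12 (R z *m R (- z)) = op23 (R (- z) *m R z).
Proof.
have := yang_baxter z (- z).
by rewrite addrN R0 op12_1 op23_1 !mulmx1 op12M op23M.
Qed.

Lemma unitarity_scalar z :
  exists c, R z *m R (- z) = c%:M /\ R (- z) *m R z = c%:M.
Proof.
apply: op12_eq_op23_scalar; first exact: yang_baxter_opp.
by have := yang_baxter_opp (- z); rewrite opprK.
Qed.

End Unitarity.

Lemma mulmx_scalar_nonunit (F : fieldType) m (A B : 'M[F]_m) (c : F) :
  A *m B = c%:M -> A \notin unitmx -> c = 0.
Proof.
move=> eABc; apply: contraNeq => c_neq0.
have : A *m B \in unitmx by rewrite eABc unitmxE det_scalar unitfE expf_neq0.
by rewrite unitmx_mul => /andP[].
Qed.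

Theorem lemma2p3 (R : realType) (n : nat) (Rz : R[i] -> 'M[R[i]]_(n * n)) :
  (forall u v : R[i],
      op12 (Rz u) *m op23 (Rz (u + v)) *m op12 (Rz v)
      = op23 (Rz v) *m op12 (Rz (u + v)) *m op23 (Rz u)) ->
  Rz 0 = 1%:M ->
  (forall z : R[i], exists c : R[i],
      Rz z *m Rz (- z) = c%:M /\ Rz (- z) *m Rz z = c%:M) /\
  (forall z : R[i], Rz z \notin unitmx ->
      Rz z *m Rz (- z) = 0 /\ Rz (- z) *m Rz z = 0).
Proof.
move=> yang_baxter R0.
have scalar := unitarity_scalar yang_baxter R0.
split=> // z Rz_nonunit.
have [c [eRR' eR'R]] := scalar z.
by rewrite eRR' eR'R (mulmx_scalar_nonunit eRR' Rz_nonunit) raddf0.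
Qed.
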